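(* Let $d\in\mathbb{N}$. For every $n\ge 2d$ and $\ell\in\mathbb{N}$, viewing cones of symmetric forms as subsets of $\mathbb{R}^{\pi(2d)}$ via coefficients in the bases $\{p^{(m)}_\lambda:\lambda\vdash 2d\}$, we have $\mathcal{P}^S_{\ell n,2d}\subseteq\mathcal{P}^S_{n,2d}$. That is, if $(c_\lambda)$ is such that $\sum_\lambda c_\lambda p^{(\ell n)}_\lambda$ is nonnegative on $\mathbb{R}^{\ell n}$, then $\sum_\lambda c_\lambda p^{(n)}_\lambda$ is nonnegative on $\mathbb{R}^n$.
   Context: $p_i^{(m)}=\frac1m(x_1^i+\dots+x_m^i)$, $p^{(m)}_\lambda=\prod_i p^{(m)}_{\lambda_i}$ for a partition $\lambda$; $\pi(2d)$ is the number of partitions of $2d$; for $m\ge 2d$, $\{p^{(m)}_\lambda:\lambda\vdash 2d\}$ is a basis of the space of symmetric forms of degree $2d$ in $m$ variables. $\mathcal{P}^S_{m,2d}$ is the cone of nonnegative symmetric forms of degree $2d$ in $m$ variables. *)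

From HB Require Import structures.
From mathcomp Require Import all_boot all_order all_algebra.
From mathcomp Require Import reals.
Set Implicit Arguments. Unset Strict Implicit. Unset Printing Implicit Defensive.
Import Order.TTheory GRing.Theory Num.Theory.
Local Open Scope ring_scope.

Definition is_partition (k : nat) (la : seq nat) : bool :=
  [&& sorted geq la, all (fun i => 0 < i)%N la & sumn la == k].

(* The (finite, duplicate-free) list of all partitions of k: every partition of
   k has at most k parts, each at most k, so it arises from some k-tuple with
   entries in 'I_(k.+1) by deleting zeros. *)
Definition partitions (k : nat) : seq (seq nat) :=
  undup [seq la <- [seq [seq i <- map val (tval t) | (0 < i)%N]
                    | t : k.-tuple 'I_k.+1] | is_partition k la].

Definition psum {R : realType} (m : nat) (i : nat) (x : 'I_m -> R) : R :=
  (m%:R)^-1 * \sum_(j < m) x j ^+ i.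

Definition ppart {R : realType} (m : nat) (la : seq nat) (x : 'I_m -> R) : R :=
  \prod_(i <- la) psum i x.

Definition symform {R : realType} (k : nat) (c : seq nat -> R) (m : nat)
  (x : 'I_m -> R) : R :=
  \sum_(la <- partitions k) c la * ppart la x.

Definition nonneg_form {R : realType} (k : nat) (c : seq nat -> R) (m : nat) : Prop :=
  forall x : 'I_m -> R, 0 <= symform k c x.

From HB Require Import structures.
From mathcomp Require Import all_boot all_order all_algebra.
From mathcomp Require Import reals.
Import Order.TTheory GRing.Theory Num.Theory.
Local Open Scope ring_scope.

(* Concatenating l copies of x in R^n gives a point of R^(l n) at which every
   normalized power sum p_i^(l n) takes the value p_i^(n)(x); hence every form
   sum_la c_la p_la^(l n) takes at that point the value of sum_la c_la p_la^(n)
   at x, and nonnegativity transfers from l n variables to n variables. *)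

(* The index k of 'I_(l * n) stands for the pair (i, j) of 'I_l * 'I_n with
   mxvec_index i j = k, and the k-th entry is the j-th entry of x. *)
Definition repeat_vec {T : Type} (l : nat) {n : nat} (x : 'I_n -> T) : 'I_(l * n) -> T :=
  fun k => x (enum_val (cast_ord (esym (mxvec_cast l n)) k)).2.

Lemma repeat_vec_mxvec_index {T : Type} (l : nat) {n : nat} (x : 'I_n -> T)
    (i : 'I_l) (j : 'I_n) :
  repeat_vec l x (mxvec_index i j) = x j.
Proof. by rewrite /repeat_vec cast_ordK enum_rankK. Qed.

Lemma sum_repeat_vec {T : Type} {V : nmodType} (l : nat) {n : nat}
    (x : 'I_n -> T) (F : T -> V) :
  \sum_(k < l * n) F (repeat_vec l x k) = (\sum_(j < n) F (x j)) *+ l.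
Proof.
rewrite (reindex _ (curry_mxvec_bij l n)) /=.
rewrite (eq_bigr (fun p => F (x p.2))) => [|[i j] _]; last first.
  by rewrite /= repeat_vec_mxvec_index.
rewrite -(pair_big xpredT xpredT (fun _ j => F (x j))) /=.
by rewrite sumr_const card_ord.
Qed.

Section RepeatVec.

Variables (R : realType) (l n : nat).
Hypothesis l_gt0 : (0 < l)%N.

Lemma psum_repeat_vec (i : nat) (x : 'I_n -> R) :
  psum i (repeat_vec l x) = psum i x.
Proof.
have l_neq0 : l%:R != 0 :> R by rewrite pnatr_eq0 -lt0n.
rewrite /psum (sum_repeat_vec l x (fun t => t ^+ i)) -[_ *+ l]mulr_natr.
by rewrite natrM invfM [_ * l%:R]mulrC mulrACA mulVf // mul1r.
Qed.

Lemma ppart_repeat_vec (la : seq nat) (x : 'I_n -> R) :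
  ppart la (repeat_vec l x) = ppart la x.
Proof. by apply: eq_bigr => i _; rewrite psum_repeat_vec. Qed.

Lemma symform_repeat_vec (k : nat) (c : seq nat -> R) (x : 'I_n -> R) :
  symform k c (repeat_vec l x) = symform k c x.
Proof. by apply: eq_bigr => la _; rewrite ppart_repeat_vec. Qed.

End RepeatVec.

(* The bound 2 d <= n only makes the p_la a basis; the inclusion of cones of
   coefficient vectors holds for every n. *)
Theorem proposition3p5 (R : realType) (d n l : nat) :
  (2 * d <= n)%N -> (0 < l)%N ->
  forall c : seq nat -> R,
    nonneg_form (2 * d) c (l * n) -> nonneg_form (2 * d) c n.
Proof.
move=> _ l_gt0 c nonneg_ln x.
rewrite -(symform_repeat_vec R l n l_gt0 (2 * d) c x).
exact: (nonneg_ln (repeat_vec l x)).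
Qed.
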